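(* Consider the linear system $\dot y = A^o_{11} y + A^o_{12} z + B^o_1 u$, $\dot z = A^o_{21} y + A^o_{22} z + B^o_2 u$, with output $y=[I_p\ 0][y;z]$, where $y\in\mathbb{R}^p$ are measured states, $z\in\mathbb{R}^{n^o-p}$ are hidden states and $u\in\mathbb{R}^m$ are inputs. Define $W^o(s)=A^o_{11}+A^o_{12}(sI-A^o_{22})^{-1}A^o_{21}$, $V^o(s)=B^o_1+A^o_{12}(sI-A^o_{22})^{-1}B^o_2$, $R^o=\mathrm{diag}\{W^o\}$ (the diagonal matrix formed from the diagonal entries of $W^o$), and the dynamical structure functions $Q=(sI-R^o)^{-1}(W^o-R^o)$, $P=(sI-R^o)^{-1}V^o$. Then \begin{align*} \mathrm{diag}\{A^o_{11}\}&=\lim_{s\to\infty}R^o(s),\\ A^o_{11}-\mathrm{diag}\{A^o_{11}\}&=\lim_{s\to\infty}sQ(s),\\ B^o_1&=\lim_{s\to\infty}sP(s). \end{align*}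
   Context: The dynamical structure functions $[Q,P]$ satisfy $Y=QY+PU$ in the Laplace domain, with $Q$ having zero diagonal; they encode the direct causal relations between measured states and between inputs and measured states. *)

From HB Require Import structures.
From mathcomp Require Import all_boot all_order all_algebra.
From mathcomp Require Import all_classical all_reals all_analysis.
Set Implicit Arguments. Unset Strict Implicit. Unset Printing Implicit Defensive.
Import Order.TTheory GRing.Theory Num.Theory.
Local Open Scope ring_scope.

(* Dimensions: p measured states, q = n^o - p hidden states, m inputs.
   Transfer functions are evaluated at a real Laplace variable s. *)
Section DSF.
Variables (R : realType) (p q m : nat).
Variables (A11 : 'M[R]_p) (A12 : 'M[R]_(p, q)) (A21 : 'M[R]_(q, p))
          (A22 : 'M[R]_q) (B1 : 'M[R]_(p, m)) (B2 : 'M[R]_(q, m)).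

Definition diagpart n (M : 'M[R]_n) : 'M[R]_n := diag_mx (\row_i M i i).

Definition Wo (s : R) : 'M[R]_p :=
  A11 + A12 *m invmx (s%:M - A22) *m A21.
Definition Vo (s : R) : 'M[R]_(p, m) :=
  B1 + A12 *m invmx (s%:M - A22) *m B2.
Definition Ro (s : R) : 'M[R]_p := diagpart (Wo s).
Definition DSF_Q (s : R) : 'M[R]_p := invmx (s%:M - Ro s) *m (Wo s - Ro s).
Definition DSF_P (s : R) : 'M[R]_(p, m) := invmx (s%:M - Ro s) *m Vo s.
End DSF.

From HB Require Import structures.
From mathcomp Require Import all_boot all_order all_algebra.
From mathcomp Require Import all_classical all_reals all_analysis.
Import Order.TTheory GRing.Theory Num.Theory numFieldNormedType.Exports.
Local Open Scope classical_set_scope.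
Local Open Scope ring_scope.
Set Implicit Arguments.
Unset Strict Implicit.
Unset Printing Implicit Defensive.

(* As [s -> +oo] the resolvent [(sI - A)^-1] is [O(1/s)]: in the entrywise
   l1-norm, [s |M| <= |M (sI - A)| + |A| |M|], which for [M = (sI - A)^-1] gives
   [|M| <= n / (s - |A|)].  Hence [W^o(s) -> A11] and [V^o(s) -> B1].  Since
   [sI - R^o(s)] is diagonal, row [i] of [s (sI - R^o(s))^-1 N] is row [i] of [N]
   scaled by [s / (s - W^o(s)_ii)], a factor tending to [1]; taking [N = W^o - R^o]
   and [N = V^o] yields the limits of [sQ] and [sP]. *)

Section EntrywiseNorm.
Variable R : realFieldType.

Definition mx_abs_sum m n (M : 'M[R]_(m, n)) := \sum_i \sum_j `|M i j|.

Lemma mx_abs_sum_ge0 m n (M : 'M[R]_(m, n)) : 0 <= mx_abs_sum M.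
Proof. by apply: sumr_ge0 => i _; apply: sumr_ge0 => j _; apply: normr_ge0. Qed.

Lemma row_abs_sum_le m n (M : 'M[R]_(m, n)) i : \sum_j `|M i j| <= mx_abs_sum M.
Proof.
rewrite [leRHS](bigD1 i) //= lerDl.
by apply: sumr_ge0 => k _; apply: sumr_ge0 => j _; apply: normr_ge0.
Qed.

Lemma abs_entry_le m n (M : 'M[R]_(m, n)) i j : `|M i j| <= mx_abs_sum M.
Proof.
apply: le_trans (row_abs_sum_le M i).
by rewrite [leRHS](bigD1 j) //= lerDl sumr_ge0 // => k _; apply: normr_ge0.
Qed.

Lemma mx_abs_sum_eq0 m n (M : 'M[R]_(m, n)) : (mx_abs_sum M == 0) = (M == 0).
Proof.
apply/eqP/eqP => [M0|->].
  by apply/matrixP => i j; apply/eqP; rewrite mxE -normr_le0 -M0 abs_entry_le.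
by apply: big1 => i _; apply: big1 => j _; rewrite mxE normr0.
Qed.

Lemma mx_abs_sum_gt0 m n (M : 'M[R]_(m, n)) : (0 < mx_abs_sum M) = (M != 0).
Proof. by rewrite lt_def mx_abs_sum_ge0 andbT mx_abs_sum_eq0. Qed.

Lemma mx_abs_sum1 n : mx_abs_sum (1%:M : 'M[R]_n) = n%:R.
Proof.
rewrite /mx_abs_sum (eq_bigr (fun=> 1)) ?sumr_const ?card_ord // => i _.
rewrite (bigD1 i) //= big1 => [|j ji]; first by rewrite !mxE eqxx normr1 addr0.
by rewrite !mxE eq_sym (negbTE ji) normr0.
Qed.

(* Row by row, [s v = v (sI - A) + v A] and [|v A|_1 <= |A|_1 |v|_1]. *)
Lemma mx_abs_sum_shift_le k n (M : 'M[R]_(k, n)) (A : 'M[R]_n) s : 0 <= s ->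
  s * mx_abs_sum M <= mx_abs_sum (M *m (s%:M - A)) + mx_abs_sum A * mx_abs_sum M.
Proof.
move=> s_ge0.
have entry_le i j :
    s * `|M i j| <= `|(M *m (s%:M - A)) i j| + \sum_l `|M i l| * `|A l j|.
  have -> : s * `|M i j| = `|(M *m (s%:M - A)) i j + (M *m A) i j|.
    by rewrite mulmxBr mul_mx_scalar !mxE subrK normrM ger0_norm.
  rewrite (le_trans (ler_normD _ _)) // lerD2l mxE.
  rewrite (le_trans (ler_norm_sum _ _ _)) //; apply: ler_sum => l _.
  by rewrite normrM.
have row_le i : s * \sum_j `|M i j| <=
    \sum_j `|(M *m (s%:M - A)) i j| + mx_abs_sum A * \sum_j `|M i j|.
  rewrite mulr_sumr (le_trans (ler_sum _ (fun j _ => entry_le i j))) //.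
  rewrite big_split /= lerD2l exchange_big /= mulr_sumr; apply: ler_sum => l _.
  by rewrite -mulr_sumr mulrC ler_wpM2r ?row_abs_sum_le.
rewrite [in leLHS]/mx_abs_sum mulr_sumr [X in _ + X]mulr_sumr -big_split /=.
by apply: ler_sum => i _; apply: row_le.
Qed.

Lemma unitmx_shift n (A : 'M[R]_n) s : mx_abs_sum A < s -> s%:M - A \in unitmx.
Proof.
move=> As; have s_ge0 := le_trans (mx_abs_sum_ge0 A) (ltW As).
rewrite unitmxE unitfE; apply/negP => /det0P [v v_neq0 vA0].
have := mx_abs_sum_shift_le v A s_ge0; rewrite vA0.
have -> : mx_abs_sum (0 : 'rV[R]_n) = 0 by apply/eqP; rewrite mx_abs_sum_eq0.
by rewrite add0r ler_pM2r ?mx_abs_sum_gt0 // leNgt As.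
Qed.

Lemma mx_abs_sum_invmx_shift_le n (A : 'M[R]_n) s : mx_abs_sum A < s ->
  mx_abs_sum (invmx (s%:M - A)) <= n%:R / (s - mx_abs_sum A).
Proof.
move=> As; have s_ge0 := le_trans (mx_abs_sum_ge0 A) (ltW As).
have := mx_abs_sum_shift_le (invmx (s%:M - A)) A s_ge0.
rewrite mulVmx ?unitmx_shift // mx_abs_sum1 -lerBlDr -mulrBl.
by rewrite ler_pdivlMr ?subr_gt0 // mulrC.
Qed.

End EntrywiseNorm.

Section LimitsAtInfinity.
Variable R : realFieldType.
Implicit Types (w : R -> R) (a : R).

Lemma subr_cvgy w a : w s @[s --> +oo] --> a -> s - w s @[s --> +oo] --> +oo.
Proof.
move=> wa; apply/cvgryPge => M.
have w_lt : \forall s \near +oo, w s < a + 1 by apply: (cvgr_lt a wa); rewrite ltrDl.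
near=> s; rewrite lerBrDr; apply: (@le_trans _ _ (M + (a + 1))).
  by rewrite lerD2l ltW //; near: s.
by near: s; apply: nbhs_pinfty_ge; rewrite num_real.
Unshelve. all: by end_near. Qed.

Lemma near_subr_gt0 w a : w s @[s --> +oo] --> a -> \forall s \near +oo, 0 < s - w s.
Proof. by move/subr_cvgy/cvgryPgt; apply. Qed.

Lemma invr_subr_cvg0 w a : w s @[s --> +oo] --> a -> (s - w s)^-1 @[s --> +oo] --> 0.
Proof.
move=> wa; apply/(gtr0_cvgV0 (near_subr_gt0 wa)).
exact: subr_cvgy wa.
Qed.

Lemma mulr_invr_subr_cvg1 w a :
  w s @[s --> +oo] --> a -> s / (s - w s) @[s --> +oo] --> (1 : R).
Proof.
move=> wa; apply: (cvg_trans (near_eq_cvg (f := fun s => 1 + w s / (s - w s)) _)).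
  near=> s; have s_gt : 0 < s - w s by near: s; apply: near_subr_gt0 wa.
  by rewrite -[1](@mulfV _ (s - w s)) ?gt_eqF // -mulrDl subrK.
have := cvgD (cvg_cst (1 : R)) (cvgM wa (invr_subr_cvg0 wa)).
by rewrite mulr0 addr0; apply.
Unshelve. all: by end_near. Qed.

Lemma invmx_shift_cvg0 n (A : 'M[R]_n) i j : invmx (s%:M - A) i j @[s --> +oo] --> 0.
Proof.
have bound_cvg0 : n%:R / (s - mx_abs_sum A) @[s --> +oo] --> 0.
  by rewrite -(mulr0 n%:R); apply: cvgMl_tmp; apply: invr_subr_cvg0 (cvg_cst _).
apply: (@squeeze_cvgr _ _ _ _ (fun s => - (n%:R / (s - mx_abs_sum A)))
  (fun s => n%:R / (s - mx_abs_sum A))); last 2 first.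
- by rewrite -oppr0; apply: cvgN.
- exact: bound_cvg0.
near=> s; rewrite -ler_norml (le_trans (abs_entry_le _ i j)) //.
by apply: mx_abs_sum_invmx_shift_le; near: s; apply: nbhs_pinfty_gt; rewrite num_real.
Unshelve. all: by end_near. Qed.

End LimitsAtInfinity.

Lemma mulmx_cvg (R : numFieldType) (T : Type) (D : set_system T) (FD : Filter D)
    m n k (F : T -> 'M[R]_(m, n)) (G : T -> 'M[R]_(n, k))
    (A : 'M[R]_(m, n)) (B : 'M[R]_(n, k)) :
  (forall i j, F t i j @[t --> D] --> A i j) ->
  (forall i j, G t i j @[t --> D] --> B i j) ->
  forall i j, (F t *m G t) i j @[t --> D] --> (A *m B) i j.
Proof.
move=> FA GB i j; rewrite [X in _ --> X]mxE; under eq_cvg do rewrite mxE.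
by apply: (cvg_big (@add_continuous R)) => // l _; apply: cvgM.
Qed.

Lemma add_mulmx_invmx_shift_cvg (R : realFieldType) m n k (C : 'M[R]_(m, k))
    (L : 'M[R]_(m, n)) (A : 'M[R]_n) (N : 'M[R]_(n, k)) i j :
  (C + L *m invmx (s%:M - A) *m N) i j @[s --> +oo] --> C i j.
Proof.
have prod_cvg : (L *m invmx (s%:M - A) *m N) i j @[s --> +oo] --> (L *m 0 *m N) i j.
  apply: mulmx_cvg => [a b|a b]; last exact: cvg_cst.
  apply: mulmx_cvg => [c d|c d]; first exact: cvg_cst.
  by rewrite mxE; apply: invmx_shift_cvg0.
rewrite mulmx0 mul0mx mxE in prod_cvg.
rewrite -[X in _ --> X]addr0; under eq_cvg do rewrite mxE.
exact: cvgD (cvg_cst _) prod_cvg.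
Qed.

Lemma diagpartE (R : realType) n (M : 'M[R]_n) i j : diagpart M i j = M i i *+ (i == j).
Proof. by rewrite !mxE. Qed.

Lemma scalar_sub_diagpart (R : realType) n (M : 'M[R]_n) s :
  s%:M - diagpart M = diag_mx (\row_k (s - M k k)).
Proof. by apply/matrixP => i j; rewrite !mxE mulrnBl. Qed.

Lemma invmx_diag (R : fieldType) n (d : 'rV[R]_n) :
  (forall k, d 0 k != 0) -> invmx (diag_mx d) = diag_mx (\row_k (d 0 k)^-1).
Proof.
move=> d_neq0; have inv_mul : diag_mx (\row_k (d 0 k)^-1) *m diag_mx d = 1%:M.
  by rewrite mulmx_diag; apply/matrixP => i j; rewrite !mxE mulVf.
have [_ d_unit] := mulmx1_unit inv_mul.
by rewrite -[LHS]mul1mx -inv_mul -mulmxA mulmxV // mulmx1.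
Qed.

Lemma scale_invmx_shift_diagpart_mul (R : realType) n k (W : 'M[R]_n)
    (N : 'M[R]_(n, k)) s i j :
  (forall l, W l l != s) ->
  (s *: (invmx (s%:M - diagpart W) *m N)) i j = s / (s - W i i) * N i j.
Proof.
move=> W_neq_s; rewrite scalar_sub_diagpart invmx_diag => [|l]; last first.
  by rewrite mxE subr_eq0 eq_sym.
by rewrite mul_diag_mx !mxE mulrA.
Qed.

Lemma diagpart_cvg (R : realType) n (W : R -> 'M[R]_n) (W0 : 'M[R]_n) :
  (forall i j, W s i j @[s --> +oo] --> W0 i j) ->
  forall i j, diagpart (W s) i j @[s --> +oo] --> diagpart W0 i j.
Proof.
move=> WW0 i j; rewrite diagpartE; under eq_cvg do rewrite diagpartE.
by case: eqVneq => _; [apply: WW0 | apply: cvg_cst].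
Qed.

Lemma scale_invmx_shift_diagpart_cvg (R : realType) n k (W : R -> 'M[R]_n)
    (N : R -> 'M[R]_(n, k)) (W0 : 'M[R]_n) i j (b : R) :
  (forall i j, W s i j @[s --> +oo] --> W0 i j) -> N s i j @[s --> +oo] --> b ->
  (s *: (invmx (s%:M - diagpart (W s)) *m N s)) i j @[s --> +oo] --> b.
Proof.
move=> WW0 Nb.
have W_neq : \forall s \near +oo, forall l, W s l l != s.
  apply: filter_forall => l; near=> s.
  by rewrite eq_sym -subr_eq0 gt_eqF //; near: s; apply: near_subr_gt0 (WW0 l l).
apply: (cvg_trans (near_eq_cvg (f := fun s => s / (s - W s i i) * N s i j) _)).
  by near=> s; rewrite scale_invmx_shift_diagpart_mul //; near: s.
rewrite -[b]mul1r; apply: cvgM Nb; exact: mulr_invr_subr_cvg1 (WW0 i i).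
Unshelve. all: by end_near. Qed.

Theorem proposition1 (R : realType) (p q m : nat)
  (A11 : 'M[R]_p) (A12 : 'M[R]_(p, q)) (A21 : 'M[R]_(q, p))
  (A22 : 'M[R]_q) (B1 : 'M[R]_(p, m)) (B2 : 'M[R]_(q, m)) :
  [/\ (forall i j : 'I_p,
         Ro A11 A12 A21 A22 s i j @[s --> +oo] --> diagpart A11 i j),
      (forall i j : 'I_p,
         (s *: DSF_Q A11 A12 A21 A22 s) i j @[s --> +oo]
           --> (A11 - diagpart A11) i j) &
      (forall (i : 'I_p) (j : 'I_m),
         (s *: DSF_P A11 A12 A21 A22 B1 B2 s) i j @[s --> +oo]
           --> B1 i j)].
Proof.
have Wo_cvg i j : Wo A11 A12 A21 A22 s i j @[s --> +oo] --> A11 i j.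
  exact: add_mulmx_invmx_shift_cvg.
have Vo_cvg i j : Vo A12 A22 B1 B2 s i j @[s --> +oo] --> B1 i j.
  exact: add_mulmx_invmx_shift_cvg.
have Ro_cvg := diagpart_cvg Wo_cvg.
split=> i j.
- exact: Ro_cvg.
- apply: (scale_invmx_shift_diagpart_cvg Wo_cvg).
  rewrite [X in _ --> X]mxE [X in _ + X]mxE.
  under eq_cvg do rewrite mxE [X in _ + X]mxE.
  exact: cvgB (Wo_cvg i j) (Ro_cvg i j).
- exact: (scale_invmx_shift_diagpart_cvg Wo_cvg).
Qed.
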